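(* Let $X,Z\in\mathbb{R}^{n\times r}$ with $XX^{T}\ne ZZ^{T}$. Let $Z_{\perp}=(I-XX^{\dagger})Z$, $$\alpha=\frac{\|Z_{\perp}Z_{\perp}^{T}\|_{F}}{\|XX^{T}-ZZ^{T}\|_{F}},\qquad\beta=\frac{\sigma_{\min}^{2}(X)}{\|XX^{T}-ZZ^{T}\|_{F}}\cdot\frac{\mathrm{tr}(Z_{\perp}Z_{\perp}^{T})}{\|Z_{\perp}Z_{\perp}^{T}\|_{F}},$$ and for $t\ge0$ let $$\psi(\alpha,\beta,t)=\begin{cases}(t/\beta)\alpha+\sqrt{1-(t/\beta)^{2}}\sqrt{1-\alpha^{2}} & \text{if }t/\beta\le\alpha,\\ 1 & \text{if }t/\beta>\alpha.\end{cases}$$ If $\beta>0$, then $\cos\theta(t)\ge\psi(\alpha,\beta,t)$ for all $t\ge0$.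
   Context: $\mathbf{e}=\mathrm{vec}(XX^{T}-ZZ^{T})\in\mathbb{R}^{n^{2}}$ (column-stacking) and $\mathbf{J}\in\mathbb{R}^{n^{2}\times nr}$ satisfies $\mathbf{J}\,\mathrm{vec}(Y)=\mathrm{vec}(XY^{T}+YX^{T})$ for all $Y\in\mathbb{R}^{n\times r}$. For $t\ge0$, $\cos\theta(t)$ is the maximum of $\frac{\mathbf{e}^{T}[\mathbf{J}y-w]}{\|\mathbf{e}\|\|\mathbf{J}y-w\|}$ over $y\in\mathbb{R}^{nr}$ and $W_{i,j}\in\mathbb{R}^{n\times n}$ ($i,j=1,\dots,r$) subject to $\frac{\langle\mathbf{J}^{T}\mathbf{J},W\rangle}{\|\mathbf{e}\|\|\mathbf{J}y-w\|}=2t$ and $W\succeq0$, where $W=[W_{i,j}]_{i,j=1}^{r}$ and $w=\sum_{i=1}^{r}\mathrm{vec}(W_{i,i})$. $A^{\dagger}$ is the pseudoinverse and $\sigma_{\min}(X)$ the $r$-th singular value of $X$. *)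

From HB Require Import structures.
From mathcomp Require Import all_boot all_order all_algebra.
From mathcomp Require Import classical_sets reals constructive_ereal ereal.
Set Implicit Arguments. Unset Strict Implicit. Unset Printing Implicit Defensive.
Import Order.TTheory GRing.Theory Num.Theory.
Local Open Scope ring_scope.
Local Open Scope classical_set_scope.

Section Defs.
Variable R : realType.

(* column-stacking vectorisation: entry (i,j) of A sits at index j*m + i *)
Definition vec m k (A : 'M[R]_(m, k)) : 'cV[R]_(k * m) := (mxvec A^T)^T.

Definition frob m k (A : 'M[R]_(m, k)) : R :=
  Num.sqrt (\sum_(i < m) \sum_(j < k) A i j ^+ 2).

Definition finner m (A B : 'M[R]_m) : R := \tr (A^T *m B).

Definition dotv p (u v : 'cV[R]_p) : R := (u^T *m v) 0 0.

Definition psd p (W : 'M[R]_p) : Prop :=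
  W^T = W /\ forall v : 'cV[R]_p, 0 <= (v^T *m W *m v) 0 0.

Definition is_pinv m k (A : 'M[R]_(m, k)) (Ad : 'M[R]_(k, m)) : Prop :=
  [/\ A *m Ad *m A = A, Ad *m A *m Ad = Ad,
      (A *m Ad)^T = A *m Ad & (Ad *m A)^T = Ad *m A].

(* s = sigma_min(X)^2 where sigma_min(X) is the r-th singular value of
   X : n x r, i.e. s is the smallest eigenvalue of X^T X. *)
Definition is_sigma_min_sq n r (X : 'M[R]_(n, r)) (s : R) : Prop :=
  eigenvalue (X^T *m X) s /\ forall l, eigenvalue (X^T *m X) l -> s <= l.

(* diagonal block W_{i,i} (n x n) of W = [W_{i,j}]_{i,j=1..r} *)
Definition diag_blk n r (W : 'M[R]_(r * n)) (i : 'I_r) : 'M[R]_n :=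
  \matrix_(a < n, b < n) W (mxvec_index i a) (mxvec_index i b).

Definition wvec n r (W : 'M[R]_(r * n)) : 'cV[R]_(n * n) :=
  \sum_(i < r) vec (diag_blk W i).

Definition cos_theta n r (X Z : 'M[R]_(n, r)) (J : 'M[R]_(n * n, r * n)) (t : R)
  : \bar R :=
  let e := vec (X *m X^T - Z *m Z^T) in
  ereal_sup [set c%:E | c in
    [set c : R | exists (y : 'cV[R]_(r * n)) (W : 'M[R]_(r * n)),
       let v := J *m y - wvec W in
       [/\ psd W, v != 0,
           finner (J^T *m J) W / (frob e * frob v) = 2 * t &
           c = dotv e v / (frob e * frob v)]]].

Definition psi (alpha beta t : R) : R :=
  if t / beta <= alpha then
    (t / beta) * alpha + Num.sqrt (1 - (t / beta) ^+ 2) * Num.sqrt (1 - alpha ^+ 2)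
  else 1.

End Defs.

(* Write Q = 1 - X X^+, N = Z_perp Z_perp^T and E = X X^T - Z Z^T.  Since
   Q E Q = -N, the symmetric matrix E + N satisfies Q (E + N) Q = 0, so it lies in
   the tangent space {X Y^T + Y X^T} and is orthogonal to N; hence
   ||E||^2 = ||E + N||^2 + ||N||^2, i.e. sqrt(1 - alpha^2) = ||E + N|| / ||E||.
   For a unit eigenvector u of X^T X with eigenvalue s = sigma_min(X)^2, the psd
   block W = vec V vec V^T with V = v u^T adds v v^T to w at the cost
   <J^T J, W> = 2 s ||v||^2 + 2 <X u, v>^2.  Blocks built from the columns of
   sqrt q Z_perp (which are orthogonal to X u) and from delta X u make every
   direction T - q N - delta^2 (X u)(X u)^T with T tangent feasible, at cost
   2 s q tr N + 4 s^2 delta^2.  If c = t / beta <= alpha, the unit direction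
   sqrt(1 - c^2) F / ||F|| - c N / ||N||, with F = E + N (or (X u)(X u)^T when
   E + N = 0), has cosine psi with E and cost exactly 2t.  Otherwise the budget
   lets one reach the direction E itself, with q = 1 and a suitable delta. *)

From HB Require Import structures.
From mathcomp Require Import all_boot all_order all_algebra.
From mathcomp Require Import classical_sets reals constructive_ereal ereal.
From mathcomp Require Import ring.
Set Implicit Arguments. Unset Strict Implicit. Unset Printing Implicit Defensive.
Import Order.TTheory GRing.Theory Num.Theory.
Local Open Scope ring_scope.

Definition mxdot (R : nzRingType) m k (A B : 'M[R]_(m, k)) : R := \tr (A^T *m B).

Section MxdotComRing.
Variable R : comNzRingType.

Lemma mxdotE m k (A B : 'M[R]_(m, k)) :
  mxdot A B = \sum_(i < m) \sum_(j < k) A i j * B i j.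
Proof.
rewrite /mxdot /mxtrace exchange_big; apply: eq_bigr => j _.
by rewrite mxE; apply: eq_bigr => i _; rewrite mxE.
Qed.

Lemma mxdotC m k (A B : 'M[R]_(m, k)) : mxdot A B = mxdot B A.
Proof. by rewrite !mxdotE; apply: eq_bigr => i _; apply: eq_bigr => j _; rewrite mulrC. Qed.

Lemma mxdotDr m k (A B C : 'M[R]_(m, k)) : mxdot A (B + C) = mxdot A B + mxdot A C.
Proof. by rewrite /mxdot mulmxDr mxtraceD. Qed.

Lemma mxdotDl m k (A B C : 'M[R]_(m, k)) : mxdot (A + B) C = mxdot A C + mxdot B C.
Proof. by rewrite mxdotC mxdotDr !(mxdotC C). Qed.

Lemma mxdotZr m k a (A B : 'M[R]_(m, k)) : mxdot A (a *: B) = a * mxdot A B.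
Proof. by rewrite /mxdot -scalemxAr mxtraceZ. Qed.

Lemma mxdotZl m k a (A B : 'M[R]_(m, k)) : mxdot (a *: A) B = a * mxdot A B.
Proof. by rewrite mxdotC mxdotZr mxdotC. Qed.

Lemma mxdotNr m k (A B : 'M[R]_(m, k)) : mxdot A (- B) = - mxdot A B.
Proof. by rewrite -scaleN1r mxdotZr mulN1r. Qed.

Lemma mxdotBr m k (A B C : 'M[R]_(m, k)) : mxdot A (B - C) = mxdot A B - mxdot A C.
Proof. by rewrite mxdotDr mxdotNr. Qed.

Lemma mxdotBl m k (A B C : 'M[R]_(m, k)) : mxdot (A - B) C = mxdot A C - mxdot B C.
Proof. by rewrite mxdotC mxdotBr !(mxdotC C). Qed.

Lemma mxdot0r m k (A : 'M[R]_(m, k)) : mxdot A 0 = 0.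
Proof. by rewrite /mxdot mulmx0 mxtrace0. Qed.

Lemma mxdot0l m k (A : 'M[R]_(m, k)) : mxdot 0 A = 0.
Proof. by rewrite mxdotC mxdot0r. Qed.

Lemma mxdot_mull m k l (A : 'M[R]_(m, k)) (B : 'M[R]_(k, l)) C :
  mxdot (A *m B) C = mxdot B (A^T *m C).
Proof. by rewrite /mxdot trmx_mul mulmxA. Qed.

Lemma mxdot_mulr m k l (A : 'M[R]_(m, k)) (B : 'M[R]_(k, l)) C :
  mxdot (A *m B) C = mxdot A (C *m B^T).
Proof. by rewrite /mxdot trmx_mul -mulmxA mxtrace_mulC mulmxA. Qed.

Lemma mxdot_outer m k (a c : 'cV[R]_m) (b d : 'cV[R]_k) :
  mxdot (a *m b^T) (c *m d^T) = mxdot a c * mxdot b d.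
Proof.
rewrite !mxdotE big_distrl; apply: eq_bigr => i _ /=.
rewrite big_ord1 big_distrr; apply: eq_bigr => j _ /=.
rewrite big_ord1 !mxE !big_ord1 !mxE; ring.
Qed.

End MxdotComRing.

Section MxdotReal.
Variable R : realDomainType.

Lemma mxdot_ge0 m k (A : 'M[R]_(m, k)) : 0 <= mxdot A A.
Proof. by rewrite mxdotE; do 2!apply: sumr_ge0 => ? _; rewrite -expr2 sqr_ge0. Qed.

Lemma mxdot_eq0 m k (A : 'M[R]_(m, k)) : (mxdot A A == 0) = (A == 0).
Proof.
apply/idP/eqP => [|->]; last by rewrite mxdot0r.
rewrite mxdotE psumr_eq0 => [/allP sum0|]; last first.
  by move=> i _; apply: sumr_ge0 => j _; rewrite -expr2 sqr_ge0.
apply/matrixP => i j; have := sum0 i (mem_index_enum i).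
rewrite psumr_eq0 => [/allP/(_ j (mem_index_enum j))|]; last first.
  by move=> l _; rewrite -expr2 sqr_ge0.
by rewrite -expr2 sqrf_eq0 mxE => /eqP.
Qed.

Lemma mxdot_gt0 m k (A : 'M[R]_(m, k)) : (0 < mxdot A A) = (A != 0).
Proof. by rewrite lt0r mxdot_ge0 mxdot_eq0 andbT. Qed.

End MxdotReal.

Lemma mulmx_tr_sum_col (R : comNzRingType) m k (A : 'M[R]_(m, k)) :
  A *m A^T = \sum_(j < k) col j A *m (col j A)^T.
Proof.
apply/matrixP => a b; rewrite summxE mxE; apply: eq_bigr => j _.
by rewrite !mxE big_ord1 !mxE.
Qed.

Lemma mxdot_mx11 (R : comNzRingType) p (u v : 'cV[R]_p) : u^T *m v = (mxdot u v)%:M.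
Proof. by rewrite [LHS]mx11_scalar /mxdot /mxtrace big_ord1. Qed.

Section VecFrobenius.
Variable R : realType.

Lemma vec_is_linear m k : linear (@vec R m k).
Proof. by move=> a A B; rewrite /vec !linearP. Qed.

HB.instance Definition _ m k :=
  GRing.isLinear.Build R 'M[R]_(m, k) 'cV[R]_(k * m) _ (@vec R m k) (@vec_is_linear m k).

Lemma mxdot_vec m k (A B : 'M[R]_(m, k)) : mxdot (vec A) (vec B) = mxdot A B.
Proof.
rewrite !mxdotE exchange_big big_ord1 /= [RHS]exchange_big /=.
rewrite (reindex _ (curry_mxvec_bij _ _)) /= [RHS]pair_bigA /=.
by apply: eq_bigr => -[j i] _ /=; rewrite /vec !mxE !mxvecE !mxE.
Qed.

Lemma frobE m k (A : 'M[R]_(m, k)) : frob A = Num.sqrt (mxdot A A).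
Proof.
by rewrite /frob mxdotE; congr Num.sqrt; do 2!apply: eq_bigr => ? _; rewrite expr2.
Qed.

Lemma frob_ge0 m k (A : 'M[R]_(m, k)) : 0 <= frob A.
Proof. exact: sqrtr_ge0. Qed.

Lemma sqr_frob m k (A : 'M[R]_(m, k)) : frob A ^+ 2 = mxdot A A.
Proof. by rewrite frobE sqr_sqrtr // mxdot_ge0. Qed.

Lemma frob_gt0 m k (A : 'M[R]_(m, k)) : (0 < frob A) = (A != 0).
Proof. by rewrite frobE sqrtr_gt0 mxdot_gt0. Qed.

Lemma frob_vec m k (A : 'M[R]_(m, k)) : frob (vec A) = frob A.
Proof. by rewrite !frobE mxdot_vec. Qed.

Lemma dotvE p (u v : 'cV[R]_p) : dotv u v = mxdot u v.
Proof. by rewrite /dotv /mxdot /mxtrace big_ord1. Qed.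

Lemma psd0 p : psd (0 : 'M[R]_p).
Proof. by split=> [|v]; rewrite ?trmx0 // mulmx0 mul0mx mxE. Qed.

Lemma psdD p (A B : 'M[R]_p) : psd A -> psd B -> psd (A + B).
Proof.
move=> [symA posA] [symB posB]; split=> [|v]; first by rewrite linearD /= symA symB.
by rewrite mulmxDr mulmxDl mxE addr_ge0.
Qed.

Lemma psd_sum p I (s : seq I) (F : I -> 'M[R]_p) :
  (forall i, psd (F i)) -> psd (\sum_(i <- s) F i).
Proof. by move=> psdF; apply: big_ind => //; [exact: psd0 | exact: psdD]. Qed.

Lemma psd_outer p (v : 'cV[R]_p) : psd (v *m v^T).
Proof.
split=> [|w]; first by rewrite trmx_mul trmxK.
rewrite mulmxA -mulmxA -[v^T *m w]trmxK trmx_mul trmxK.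
set a := w^T *m v.
by rewrite mxE big_ord1 [a^T _ _]mxE -expr2 sqr_ge0.
Qed.

End VecFrobenius.

Section BlockDiagonal.
Variable R : realType.

Lemma wvec_is_linear n r : linear (@wvec R n r).
Proof.
move=> a A B; rewrite /wvec scaler_sumr -big_split; apply: eq_bigr => i _ /=.
by rewrite -linearP; congr vec; apply/matrixP => x y; rewrite !mxE.
Qed.

HB.instance Definition _ n r :=
  GRing.isLinear.Build R 'M[R]_(r * n) 'cV[R]_(n * n) _ (@wvec R n r)
    (@wvec_is_linear n r).

Lemma finner_is_scalar p (M : 'M[R]_p) : scalar (finner M).
Proof. by move=> a A B; rewrite /finner mulmxDr -scalemxAr mxtraceD mxtraceZ. Qed.

HB.instance Definition _ p M :=
  GRing.isLinear.Build R 'M[R]_p R _ (@finner R p M) (@finner_is_scalar p M).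

Definition vec_outer m k (V : 'M[R]_(m, k)) : 'M[R]_(k * m) := vec V *m (vec V)^T.

Lemma psd_vec_outer m k (V : 'M[R]_(m, k)) : psd (vec_outer V).
Proof. exact: psd_outer. Qed.

Lemma wvec_vec_outer n r (V : 'M[R]_(n, r)) : wvec (vec_outer V) = vec (V *m V^T).
Proof.
rewrite /wvec -linear_sum; congr vec; apply/matrixP => a b.
rewrite summxE mxE; apply: eq_bigr => i _.
by rewrite !mxE big_ord1 /vec !mxE !mxvecE !mxE.
Qed.

Lemma finner_vec_outer q m k (J : 'M[R]_(q, k * m)) (V : 'M[R]_(m, k)) :
  finner (J^T *m J) (vec_outer V) = mxdot (J *m vec V) (J *m vec V).
Proof.
by rewrite /finner /vec_outer /mxdot trmx_mul trmxK mulmxA mxtrace_mulC !trmx_mul !mulmxA.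
Qed.

End BlockDiagonal.

(* With a := p T p, b := p T q, c := q T p one has T = a + b + c, while
   p S^T = a / 2 + b and S p = a / 2 + c. *)
Lemma projector_sym_split (R : numFieldType) n (p T : 'M[R]_n) :
  p^T = p -> p *m p = p -> T^T = T -> (1%:M - p) *m T *m (1%:M - p) = 0 ->
  let S := 2^-1 *: (p *m T *m p) + (1%:M - p) *m T *m p in
  p *m S^T + S *m p = T.
Proof.
move=> pT pp TT; have qT : (1%:M - p)^T = 1%:M - p by rewrite linearB /= trmx1 pT.
have pq1 : p + (1%:M - p) = 1%:M by rewrite subrKC.
set q := 1%:M - p in qT pq1 *; clearbody q => qTq S.
set a := p *m T *m p; set b := p *m T *m q; set c := q *m T *m p.
have decT : T = a + b + c.
  have -> : T = (p + q) *m T *m (p + q) by rewrite pq1 mul1mx mulmx1.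
  by rewrite mulmxDl !mulmxDr !mulmxDl qTq addr0 -addrA [c + b]addrC addrA.
have aT : a^T = a by rewrite !trmx_mul pT TT mulmxA.
have cT : c^T = b by rewrite !trmx_mul pT TT qT mulmxA.
have pST : p *m S^T = 2^-1 *: a + b.
  by rewrite linearD linearZ /= aT cT mulmxDr -scalemxAr /a /b !mulmxA pp.
have Sp : S *m p = 2^-1 *: a + c.
  by rewrite mulmxDl -scalemxAl /a /c -!mulmxA pp.
rewrite pST Sp addrACA -scalerDl -[2^-1]mul1r -splitr scale1r.
by rewrite addrA -decT.
Qed.

Section Pseudoinverse.
Variables (R : realType) (n r : nat) (X : 'M[R]_(n, r)) (Xd : 'M[R]_(r, n)).
Hypothesis pinvX : is_pinv X Xd.

Local Notation P := (X *m Xd).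
Local Notation Q := (1%:M - X *m Xd).

Lemma pinv_sym : P^T = P. Proof. by case: pinvX. Qed.
Lemma pinv_mulX : P *m X = X. Proof. by case: pinvX. Qed.
Lemma pinv_idem : P *m P = P. Proof. by rewrite mulmxA pinv_mulX. Qed.
Lemma pinvC_sym : Q^T = Q. Proof. by rewrite linearB /= trmx1 pinv_sym. Qed.
Lemma pinvC_mulX : Q *m X = 0. Proof. by rewrite mulmxBl mul1mx pinv_mulX subrr. Qed.
Lemma pinvC_idem : Q *m Q = Q.
Proof. by rewrite mulmxBl mul1mx mulmxBr mulmx1 pinv_idem subrr subr0. Qed.

Lemma sym_tangent_solvable (T : 'M[R]_n) : T^T = T -> Q *m T *m Q = 0 ->
  exists Y : 'M[R]_(n, r), X *m Y^T + Y *m X^T = T.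
Proof.
move=> TT QTQ; have [S splitT] : exists S, P *m S^T + S *m P = T.
  by eexists; exact: projector_sym_split pinv_sym pinv_idem TT QTQ.
exists (S *m Xd^T).
by rewrite trmx_mul trmxK mulmxA -[_ *m X^T]mulmxA -trmx_mul pinv_sym.
Qed.

End Pseudoinverse.

Lemma sym_eigenvalue_unit_eigvec (R : realType) p (A : 'M[R]_p) s :
  A^T = A -> eigenvalue A s -> exists u : 'cV[R]_p, mxdot u u = 1 /\ A *m u = s *: u.
Proof.
move=> symA /eigenvalueP[v vA v0]; set w := v^T.
have Aw : A *m w = s *: w by rewrite -symA -trmx_mul vA linearZ.
have w_gt0 : 0 < mxdot w w by rewrite mxdot_gt0 trmx_eq0.
exists ((Num.sqrt (mxdot w w))^-1 *: w); split; last first.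
  by rewrite -scalemxAr Aw !scalerA mulrC.
rewrite mxdotZl mxdotZr mulrA -expr2 exprVn sqr_sqrtr ?mulVf ?gt_eqF //.
exact: ltW.
Qed.

(* [Q] stands for [1 - X X^+] and [s] for [sigma_min(X)^2]. *)
Section LowerBound.
Variables (R : realType) (n r : nat) (X Z : 'M[R]_(n, r)) (Q : 'M[R]_n).
Variables (J : 'M[R]_(n * n, r * n)) (s : R) (u : 'cV[R]_r).
Hypotheses (Q_sym : Q^T = Q) (Q_idem : Q *m Q = Q) (Q_X : Q *m X = 0).
Hypothesis Q_tangent : forall T : 'M[R]_n, T^T = T -> Q *m T *m Q = 0 ->
  exists Y : 'M[R]_(n, r), X *m Y^T + Y *m X^T = T.
Hypothesis J_tangent : forall Y : 'M[R]_(n, r), J *m vec Y = vec (X *m Y^T + Y *m X^T).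
Hypothesis u_unit : mxdot u u = 1.
Hypothesis u_eig : X^T *m X *m u = s *: u.

Local Notation Zp := (Q *m Z).
Local Notation N := (Zp *m Zp^T).
Local Notation E := (X *m X^T - Z *m Z^T).
Local Notation Xu := (X *m u).
Local Notation G := (Xu *m Xu^T).

Lemma trX_Q : X^T *m Q = 0.
Proof. by rewrite -Q_sym -trmx_mul Q_X trmx0. Qed.

Lemma compress_N : Q *m N *m Q = N.
Proof.
set Zp := Q *m Z; have QZp : Q *m Zp = Zp by rewrite mulmxA Q_idem.
by rewrite mulmxA QZp -mulmxA -[M in Zp^T *m M]Q_sym -trmx_mul QZp.
Qed.

Lemma compress_E : Q *m E *m Q = - N.
Proof.
rewrite mulmxBr mulmxBl !mulmxA Q_X !mul0mx sub0r.
by rewrite trmx_mul Q_sym !mulmxA.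
Qed.

Lemma compress_EN : Q *m (E + N) *m Q = 0.
Proof. by rewrite mulmxDr mulmxDl compress_E compress_N addNr. Qed.

Lemma sym_EN : (E + N)^T = E + N.
Proof. by rewrite linearD linearB /= !trmx_mul !trmxK. Qed.

Lemma mxdot_compressed_N (F : 'M[R]_n) : Q *m F *m Q = 0 -> mxdot F N = 0.
Proof.
move=> QFQ; rewrite mxdotC -compress_N mxdot_mulr mxdot_mull Q_sym.
by rewrite mulmxA QFQ mxdot0r.
Qed.

Lemma mxdot_E_compressed (F : 'M[R]_n) :
  Q *m F *m Q = 0 -> mxdot E F = mxdot (E + N) F.
Proof.
by move=> QFQ; rewrite [RHS]mxdotDl [mxdot N F]mxdotC mxdot_compressed_N ?addr0.
Qed.

Lemma mxdot_E_N : mxdot E N = - mxdot N N.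
Proof.
by rewrite -[E](addrK N) mxdotBl (mxdot_compressed_N compress_EN) sub0r.
Qed.

Lemma sqr_frob_E : frob E ^+ 2 = frob (E + N) ^+ 2 + frob N ^+ 2.
Proof.
rewrite !sqr_frob [mxdot (E + N) _]mxdotDr (mxdot_compressed_N compress_EN) addr0.
by rewrite [mxdot (E + N) E]mxdotDl [mxdot N E]mxdotC mxdot_E_N subrK.
Qed.

Lemma frob_N_le : frob N <= frob E.
Proof.
by rewrite -(ler_pXn2r (ltn0Sn 1)) ?nnegrE ?frob_ge0 // sqr_frob_E lerDr sqr_ge0.
Qed.

Lemma sqrt1_sub_sqr_frob_ratio : 0 < frob E ->
  Num.sqrt (1 - (frob N / frob E) ^+ 2) = frob (E + N) / frob E.
Proof.
move=> sE_gt0; have fEN2 : frob (E + N) ^+ 2 = frob E ^+ 2 - frob N ^+ 2.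
  by rewrite sqr_frob_E addrK.
have -> : 1 - (frob N / frob E) ^+ 2 = (frob (E + N) / frob E) ^+ 2.
  by rewrite !expr_div_n fEN2; field; rewrite gt_eqF.
by rewrite sqrtr_sqr ger0_norm // divr_ge0 ?frob_ge0.
Qed.

Lemma mxdot_Xu : mxdot Xu Xu = s.
Proof. by rewrite mxdot_mull mulmxA u_eig mxdotZr u_unit mulr1. Qed.

Lemma sym_G : G^T = G.
Proof. by rewrite trmx_mul trmxK. Qed.

Lemma compress_G : Q *m G *m Q = 0.
Proof. by rewrite !mulmxA Q_X !mul0mx. Qed.

Lemma mxdot_G : mxdot G G = s ^+ 2.
Proof. by rewrite mxdot_outer mxdot_Xu expr2. Qed.

Lemma mxdot_Xu_Zp j : mxdot Xu (col j Zp) = 0.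
Proof. by rewrite mxdot_mull !colE !mulmxA trX_Q !mul0mx mxdot0r. Qed.

Lemma wvec_rank_one (v : 'cV[R]_n) c :
  wvec (vec_outer (c *: (v *m u^T))) = vec (c ^+ 2 *: (v *m v^T)).
Proof.
rewrite wvec_vec_outer; congr vec; rewrite linearZ /= -scalemxAr -scalemxAl scalerA -expr2.
by rewrite trmx_mul trmxK mulmxA -[v *m u^T *m u]mulmxA mxdot_mx11 u_unit mulmx1.
Qed.

Lemma finner_rank_one (v : 'cV[R]_n) c :
  finner (J^T *m J) (vec_outer (c *: (v *m u^T)))
  = c ^+ 2 * (2 * s * mxdot v v + 2 * mxdot Xu v ^+ 2).
Proof.
have XVt : X *m (c *: (v *m u^T))^T + c *: (v *m u^T) *m X^T
    = c *: (Xu *m v^T + v *m Xu^T).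
  rewrite linearZ /= -scalemxAr -scalemxAl scalerDr.
  by rewrite !trmx_mul trmxK !mulmxA.
rewrite finner_vec_outer J_tangent mxdot_vec XVt mxdotZl mxdotZr.
rewrite !mxdotDl !mxdotDr !mxdot_outer mxdot_Xu [mxdot v Xu]mxdotC; ring.
Qed.

Lemma exists_Zp_blocks q : 0 <= q -> exists W : 'M[R]_(r * n),
  [/\ psd W, wvec W = vec (q *: N) & finner (J^T *m J) W = 2 * s * q * \tr N].
Proof.
move=> q_ge0; pose V j := Num.sqrt q *: (col j Zp *m u^T).
exists (\sum_(j < r) vec_outer (V j)); split.
- by apply: psd_sum => j; apply: psd_vec_outer.
- rewrite linear_sum (mulmx_tr_sum_col Zp) scaler_sumr linear_sum.
  apply: eq_bigr => j _.
  by rewrite -[in RHS](sqr_sqrtr q_ge0); apply: wvec_rank_one.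
- rewrite linear_sum (mulmx_tr_sum_col Zp) linear_sum mulr_sumr.
  apply: eq_bigr => j _ /=; rewrite /V finner_rank_one mxdot_Xu_Zp sqr_sqrtr //.
  by rewrite mxtrace_mulC /mxdot; ring.
Qed.

Lemma exists_Xu_block dl : exists W : 'M[R]_(r * n),
  [/\ psd W, wvec W = vec (dl ^+ 2 *: G) & finner (J^T *m J) W = 4 * s ^+ 2 * dl ^+ 2].
Proof.
pose V := dl *: (Xu *m u^T); exists (vec_outer V); split.
- exact: psd_vec_outer.
- exact: wvec_rank_one.
- by rewrite finner_rank_one mxdot_Xu; ring.
Qed.

Lemma exists_feasible_direction (T : 'M[R]_n) q dl :
  0 <= q -> T^T = T -> Q *m T *m Q = 0 ->
  exists (y : 'cV[R]_(r * n)) (W : 'M[R]_(r * n)),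
  [/\ psd W, J *m y - wvec W = vec (T - (q *: N + dl ^+ 2 *: G)) &
      finner (J^T *m J) W = 2 * s * q * \tr N + 4 * s ^+ 2 * dl ^+ 2].
Proof.
move=> q_ge0 symT QTQ; have [Y tangentY] := Q_tangent symT QTQ.
have [W1 [psdW1 wW1 fW1]] := exists_Zp_blocks q_ge0.
have [W2 [psdW2 wW2 fW2]] := exists_Xu_block dl.
exists (vec Y), (W1 + W2); split.
- exact: psdD.
- by rewrite J_tangent tangentY [wvec _]linearD /= wW1 wW2 -linearD -linearB.
- by rewrite linearD /= fW1 fW2.
Qed.

Lemma cos_theta_ge_direction t (T : 'M[R]_n) q dl :
  0 <= q -> T^T = T -> Q *m T *m Q = 0 ->
  let D := T - (q *: N + dl ^+ 2 *: G) in D != 0 ->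
  (2 * s * q * \tr N + 4 * s ^+ 2 * dl ^+ 2) / (frob E * frob D) = 2 * t ->
  ((mxdot E D / (frob E * frob D))%:E <= cos_theta X Z J t)%E.
Proof.
move=> q_ge0 symT QTQ D D0 budget.
have [y [W [psdW yW fW]]] := exists_feasible_direction dl q_ge0 symT QTQ.
apply: ereal_sup_ubound; exists (mxdot E D / (frob E * frob D)) => //.
exists y, W; rewrite yW -/D; split => //.
- by rewrite -frob_gt0 frob_vec frob_gt0.
- by rewrite fW !frob_vec.
- by rewrite dotvE mxdot_vec !frob_vec.
Qed.

Lemma exists_aligned_direction : 0 < s -> exists F : 'M[R]_n,
  [/\ F^T = F, Q *m F *m Q = 0, F != 0 & mxdot E F = frob (E + N) * frob F].
Proof.
move=> s_gt0; have [EN0 | EN_neq0] := eqVneq (E + N) 0.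
  exists G; split; [exact: sym_G | exact: compress_G | |].
    by rewrite -mxdot_eq0 mxdot_G expf_neq0 ?gt_eqF.
  by rewrite (mxdot_E_compressed compress_G) EN0 mxdot0l frobE mxdot0l sqrtr0 mul0r.
exists (E + N); split=> //; [exact: sym_EN | exact: compress_EN |].
by rewrite (mxdot_E_compressed compress_EN) -expr2 sqr_frob.
Qed.

Lemma cos_theta_ge_combination c : 0 < s -> 0 < frob N -> 0 <= c <= 1 ->
  (((c * frob N + Num.sqrt (1 - c ^+ 2) * frob (E + N)) / frob E)%:E
    <= cos_theta X Z J (c * (s / frob E * (\tr N / frob N))))%E.
Proof.
move=> s_gt0 sN_gt0 /andP[c_ge0 c_le1].
have [F [symF QFQ F_neq0 EF]] := exists_aligned_direction s_gt0.
have sE_gt0 : 0 < frob E := lt_le_trans sN_gt0 frob_N_le.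
have sF_gt0 : 0 < frob F by rewrite frob_gt0.
set d := Num.sqrt (1 - c ^+ 2); have d2 : d ^+ 2 = 1 - c ^+ 2.
  by rewrite sqr_sqrtr // subr_ge0 expr_le1.
set a := d / frob F; set q := c / frob N.
have q_ge0 : 0 <= q by rewrite divr_ge0 ?frob_ge0.
have symT : (a *: F)^T = a *: F by rewrite linearZ /= symF.
have QTQ : Q *m (a *: F) *m Q = 0 by rewrite -scalemxAr -scalemxAl QFQ scaler0.
have FN : mxdot F N = 0 := mxdot_compressed_N QFQ.
have D_eq : a *: F - (q *: N + 0 ^+ 2 *: G) = a *: F - q *: N.
  by rewrite expr0n scale0r addr0.
have dotD : mxdot (a *: F - q *: N) (a *: F - q *: N) = 1.
  rewrite mxdotBl !mxdotBr !mxdotZl !mxdotZr FN [mxdot N F]mxdotC FN -!sqr_frob.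
  rewrite /a /q !mulr0 subr0 sub0r opprK -[1](subrK (c ^+ 2)) -d2.
  by field; rewrite !gt_eqF.
have frobD : frob (a *: F - q *: N) = 1 by rewrite frobE dotD sqrtr1.
have dotED : mxdot E (a *: F - q *: N) = c * frob N + d * frob (E + N).
  rewrite mxdotBr !mxdotZr EF mxdot_E_N -sqr_frob /a /q.
  by field; rewrite !gt_eqF.
have := cos_theta_ge_direction (t := c * (s / frob E * (\tr N / frob N))) (dl := 0)
  q_ge0 symT QTQ.
rewrite /= D_eq frobD mulr1 dotED; apply; first by rewrite -frob_gt0 frobD.
by rewrite expr0n /= mulr0 addr0 /q; field; rewrite !gt_eqF.
Qed.

Lemma cos_theta_ge1 t : 0 < s -> E != 0 -> s * \tr N <= t * frob E ^+ 2 ->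
  (1%:E <= cos_theta X Z J t)%E.
Proof.
move=> s_gt0 E_neq0 budget_ok; have sE_gt0 : 0 < frob E by rewrite frob_gt0.
set dl := Num.sqrt ((t * frob E ^+ 2 - s * \tr N) / (2 * s ^+ 2)).
have dl2 : dl ^+ 2 = (t * frob E ^+ 2 - s * \tr N) / (2 * s ^+ 2).
  by rewrite sqr_sqrtr // divr_ge0 ?subr_ge0 // mulr_ge0 // sqr_ge0.
have symT : (E + N + dl ^+ 2 *: G)^T = E + N + dl ^+ 2 *: G.
  by rewrite linearD linearZ /= sym_EN sym_G.
have QTQ : Q *m (E + N + dl ^+ 2 *: G) *m Q = 0.
  by rewrite mulmxDr mulmxDl -scalemxAr -scalemxAl compress_EN compress_G scaler0 addr0.
have D_eq : E + N + dl ^+ 2 *: G - (1 *: N + dl ^+ 2 *: G) = E.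
  by rewrite scale1r -(addrA E N) addrK.
have := cos_theta_ge_direction (t := t) (dl := dl) ler01 symT QTQ.
rewrite /= D_eq -sqr_frob expr2 divff ?mulf_neq0 ?gt_eqF //; apply => //.
by rewrite dl2; field; rewrite !gt_eqF.
Qed.

Lemma beta_gt0_pos : 0 < s / frob E * (\tr N / frob N) ->
  [/\ 0 < s, 0 < frob E & 0 < frob N].
Proof.
move=> beta_gt0; have sE_gt0 : 0 < frob E.
  rewrite lt0r frob_ge0 andbT; apply: contraTneq beta_gt0 => ->.
  by rewrite invr0 mulr0 mul0r ltxx.
have sN_gt0 : 0 < frob N.
  rewrite lt0r frob_ge0 andbT; apply: contraTneq beta_gt0 => ->.
  by rewrite invr0 !mulr0 ltxx.
split=> //; rewrite -mulrA in beta_gt0; set k := (frob E)^-1 * _ in beta_gt0.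
have k_ge0 : 0 <= k by rewrite mulr_ge0 ?invr_ge0 ?divr_ge0 ?frob_ge0 // mxtrace_mulC mxdot_ge0.
have k_gt0 : 0 < k.
  by rewrite lt0r k_ge0 andbT; apply: contraTneq beta_gt0 => ->; rewrite mulr0 ltxx.
by rewrite -(pmulr_lgt0 _ k_gt0).
Qed.

Lemma cos_theta_ge_psi t : 0 < s / frob E * (\tr N / frob N) -> 0 <= t ->
  ((psi (frob N / frob E) (s / frob E * (\tr N / frob N)) t)%:E
    <= cos_theta X Z J t)%E.
Proof.
set alpha := frob N / frob E; set beta := _ * _ => beta_gt0 t_ge0.
have [s_gt0 sE_gt0 sN_gt0] := beta_gt0_pos beta_gt0.
have alpha_le1 : alpha <= 1 by rewrite ler_pdivrMr // mul1r frob_N_le.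
rewrite /psi; case: ifP => [small | /negbT large].
  have c_01 : 0 <= t / beta <= 1.
    by rewrite divr_ge0 ?(ltW beta_gt0) // (le_trans small alpha_le1).
  have := cos_theta_ge_combination s_gt0 sN_gt0 c_01.
  rewrite -/beta divfK ?gt_eqF //; apply: le_trans.
  by rewrite lee_fin sqrt1_sub_sqr_frob_ratio // /alpha mulrDl !mulrA.
apply: cos_theta_ge1; rewrite -?frob_gt0 //.
rewrite -ltNge ltr_pdivlMr // in large.
have -> : s * \tr N = alpha * beta * frob E ^+ 2.
  by rewrite /alpha /beta; field; rewrite !gt_eqF.
by rewrite ler_pM2r ?exprn_gt0 // ltW.
Qed.

End LowerBound.

Theorem lemma16 (R : realType) (n r : nat) (X Z : 'M[R]_(n, r))
  (Xd : 'M[R]_(r, n)) (J : 'M[R]_(n * n, r * n)) (smin2 : R) :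
  X *m X^T != Z *m Z^T ->
  is_pinv X Xd ->
  (forall Y : 'M[R]_(n, r), J *m vec Y = vec (X *m Y^T + Y *m X^T)) ->
  is_sigma_min_sq X smin2 ->
  let Zp := (1%:M - X *m Xd) *m Z in
  let alpha := frob (Zp *m Zp^T) / frob (X *m X^T - Z *m Z^T) in
  let beta := smin2 / frob (X *m X^T - Z *m Z^T)
              * (\tr (Zp *m Zp^T) / frob (Zp *m Zp^T)) in
  0 < beta ->
  forall t : R, 0 <= t -> ((psi alpha beta t)%:E <= cos_theta X Z J t)%E.
Proof.
(* [X X^T != Z Z^T] follows from [0 < beta], and of [is_sigma_min_sq] only the
   eigenvalue property is needed. *)
move=> _ pinvX J_tangent [eig_s _] /= beta_gt0 t t_ge0.
have symXtX : (X^T *m X)^T = X^T *m X by rewrite trmx_mul trmxK.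
have [u [u_unit u_eig]] := sym_eigenvalue_unit_eigvec symXtX eig_s.
exact: (cos_theta_ge_psi (Z := Z) (pinvC_sym pinvX) (pinvC_idem pinvX) (pinvC_mulX pinvX)
  (sym_tangent_solvable pinvX) J_tangent u_unit u_eig beta_gt0 t_ge0).
Qed.
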